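(* The unary language $\mathtt{UGAUSS}=\{a^{n^2+n}\mid n\in\mathbb{N}\}$ is recognized by some real-time deterministic $2$-counter automaton (rtD2CA).
   Context: Here $\mathbb{N}=\{0,1,2,\dots\}$. A real-time deterministic $k$-counter automaton (rtD$k$CA) is a 5-tuple $(Q,\Sigma,\delta,q_0,Q_a)$ with finite state set $Q$, initial state $q_0$, accept states $Q_a\subseteq Q$, and $k$ integer counters initially $0$. The input $w$ is read as $\cent w\$$ left to right, one symbol per step. The transition function $\delta(q,\sigma,\theta)=(q',c)$, where $\theta\in\{0,\pm\}^k$ records for each counter whether it is zero or nonzero and $c\in\{-1,0,1\}^k$, means: in state $q$ reading $\sigma$ with counter status $\theta$, move the head right, go to $q'$ and add $c$ to the counters. The input is accepted iff the machine is in an accept state after scanning $\$$. *)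

From mathcomp Require Import all_boot.
From Stdlib Require Import ZArith.
Set Implicit Arguments. Unset Strict Implicit. Unset Printing Implicit Defensive.

Inductive tape_sym (Sigma : Type) : Type :=
| Cent : tape_sym Sigma
| Dollar : tape_sym Sigma
| Letter : Sigma -> tape_sym Sigma.
Arguments Cent {Sigma}. Arguments Dollar {Sigma}.

Inductive cupd : Type := CDec | CStay | CInc.
Definition cupd_val (u : cupd) : Z :=
  match u with CDec => (-1)%Z | CStay => 0%Z | CInc => 1%Z end.

(* A real-time deterministic k-counter automaton (Q, Sigma, delta, q0, Q_a).
   The counter status theta : 'I_k -> bool records for each counter
   whether it is zero (true) or nonzero (false). *)
Record rtDCA (k : nat) (Sigma : Type) := RtDCA {
  rt_state : finType;
  rt_delta : rt_state -> tape_sym Sigma -> ('I_k -> bool) -> rt_state * ('I_k -> cupd);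
  rt_q0 : rt_state;
  rt_acc : pred rt_state
}.

Section Run.
Variables (k : nat) (Sigma : Type) (M : rtDCA k Sigma).

Definition config := (rt_state M * ('I_k -> Z))%type.

Definition step (c : config) (s : tape_sym Sigma) : config :=
  let: (q, ctr) := c in
  let theta := fun i => (ctr i =? 0)%Z in
  let: (q', upd) := rt_delta q s theta in
  (q', fun i => (ctr i + cupd_val (upd i))%Z).

Definition tape (w : seq Sigma) : seq (tape_sym Sigma) :=
  Cent :: map (@Letter Sigma) w ++ [:: Dollar].

Definition final_config (w : seq Sigma) : config :=
  foldl step (rt_q0 M, fun _ => 0%Z) (tape w).

Definition accepts (w : seq Sigma) : bool := @rt_acc k Sigma M (final_config w).1.
End Run.

Definition UGAUSS (w : seq unit) : Prop := exists n : nat, size w = n * n + n.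

(* The automaton reads a^m in blocks: block n has length 2n+2 and starts after
   n^2+n letters, so the block starts are exactly the members of UGAUSS.  At a
   block start the counters are (n, 0).  In the ascending phase each letter
   moves one unit from the first counter to the second; when the first counter
   is empty it switches to the descending phase, adding one unit to the first
   counter, and each further letter moves a unit back until the second counter
   is empty, leaving (n+1, 0) for the next block after 2n+2 letters.  The
   second counter is zero during the ascending phase only at the block start,
   which is what the endmarker checks. *)
From Stdlib Require Import ZArith Lia.
From mathcomp Require Import all_boot zify.
Set Implicit Arguments. Unset Strict Implicit. Unset Printing Implicit Defensive.

Section UnaryRun.
Variables (k : nat) (M : rtDCA k unit).

Definition read_letter (c : config M) : config M := step c (Letter tt).

Definition start_config : config M := step (rt_q0 M, fun _ => 0%Z) Cent.

Lemma foldl_read_letter (w : seq unit) (c : config M) :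
  foldl (@step k unit M) c (map (@Letter unit) w) = iter (size w) read_letter c.
Proof. by elim: w c => //= [[] w IH] c; rewrite IH -iterSr. Qed.

Lemma accepts_unary (w : seq unit) :
  accepts M w = @rt_acc k unit M (step (iter (size w) read_letter start_config) Dollar).1.
Proof. by rewrite /accepts /final_config /tape /= foldl_cat foldl_read_letter. Qed.

End UnaryRun.

Definition ctr_x : 'I_2 := ord0.
Definition ctr_y : 'I_2 := ord_max.

Definition updates (ux uy : cupd) : 'I_2 -> cupd :=
  fun i => if i == ctr_x then ux else uy.

(* A state is a pair (descending phase, verdict); the verdict is only set by
   the endmarker. *)
Definition gauss_delta (q : bool * bool) (s : tape_sym unit) (zero : 'I_2 -> bool) :
  (bool * bool) * ('I_2 -> cupd) :=
  match s with
  | Cent => (q, updates CStay CStay)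
  | Dollar => ((q.1, ~~ q.1 && zero ctr_y), updates CStay CStay)
  | Letter _ =>
    if q.1 then
      if zero ctr_y then ((false, false), updates CStay CStay)
      else ((true, false), updates CInc CDec)
    else
      if zero ctr_x then ((true, false), updates CInc CStay)
      else ((false, false), updates CDec CInc)
  end.

Definition gauss_dca : rtDCA 2 unit :=
  @RtDCA 2 unit (bool * bool)%type gauss_delta (false, false) snd.

Definition conf_is (c : config gauss_dca) (down : bool) (x y : nat) : Prop :=
  [/\ c.1 = (down, false), c.2 ctr_x = Z.of_nat x & c.2 ctr_y = Z.of_nat y].

Notation read := (@read_letter 2 gauss_dca).

Lemma conf_is_start : conf_is (start_config gauss_dca) false 0 0.
Proof. by []. Qed.

Lemma read_ascend c x y :
  conf_is c false x.+1 y -> conf_is (read c) false x y.+1.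
Proof.
case: c => q ctr [/= -> Hx Hy]; rewrite /read_letter /step /= Hx.
have -> : (Z.of_nat x.+1 =? 0)%Z = false by apply/Z.eqb_neq; lia.
by split => //=; rewrite ?Hx ?Hy; lia.
Qed.

Lemma read_turn_down c y :
  conf_is c false 0 y -> conf_is (read c) true 1 y.
Proof.
case: c => q ctr [/= -> Hx Hy]; rewrite /read_letter /step /= ?Hx ?Hy /=.
by split => //=; rewrite ?Hx ?Hy; lia.
Qed.

Lemma read_descend c x y :
  conf_is c true x y.+1 -> conf_is (read c) true x.+1 y.
Proof.
case: c => q ctr [/= -> Hx Hy]; rewrite /read_letter /step /= Hy.
have -> : (Z.of_nat y.+1 =? 0)%Z = false by apply/Z.eqb_neq; lia.
by split => //=; rewrite ?Hx ?Hy; lia.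
Qed.

Lemma read_turn_up c x :
  conf_is c true x 0 -> conf_is (read c) false x 0.
Proof.
case: c => q ctr [/= -> Hx Hy]; rewrite /read_letter /step /= ?Hx ?Hy /=.
by split => //=; rewrite ?Hx ?Hy; lia.
Qed.

Lemma verdict_conf c down x y :
  conf_is c down x y -> (step c Dollar).1.2 = ~~ down && (y == 0).
Proof.
case: c => q ctr [/= -> _ Hy]; rewrite /step /= Hy.
by case: y {Hy} => [|y] //=; case: down.
Qed.

Lemma iter_ascend c x y n :
  conf_is c false (n + x) y -> conf_is (iter n read c) false x (n + y).
Proof.
elim: n c y => [|n IH] c y Hc //; rewrite iterSr addSnnS.
by apply: IH; apply: read_ascend; rewrite -addSn.
Qed.

Lemma iter_descend c x y n :
  conf_is c true x (n + y) -> conf_is (iter n read c) true (n + x) y.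
Proof.
elim: n c x => [|n IH] c x Hc //; rewrite iterSr addSnnS.
by apply: IH; apply: read_descend; rewrite -addSn.
Qed.

Lemma read_half_block c n :
  conf_is c false n 0 -> conf_is (iter n.+1 read c) true 1 n.
Proof.
move=> Hc; rewrite iterS; apply: read_turn_down.
by rewrite -[n in conf_is _ _ _ n]addn0; apply: iter_ascend; rewrite addn0.
Qed.

Lemma read_block c n :
  conf_is c false n 0 -> conf_is (iter (n.+1 + n.+1) read c) false n.+1 0.
Proof.
move=> /read_half_block Hc; rewrite iterD iterS; apply: read_turn_up.
by rewrite -[X in conf_is _ _ X]addn1; apply: iter_descend; rewrite addn0.
Qed.

Lemma conf_is_block_start n :
  conf_is (iter (n * n + n) read (start_config gauss_dca)) false n 0.
Proof.
elim: n => [|n IH]; first exact: conf_is_start.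
have -> : n.+1 * n.+1 + n.+1 = n.+1 + n.+1 + (n * n + n) by lia.
by rewrite iterD; apply: read_block.
Qed.

Lemma verdict_within_block c n j :
  conf_is c false n 0 -> 0 < j < n.+1 + n.+1 ->
  (step (iter j read c) Dollar).1.2 = false.
Proof.
move=> Hc /andP[j_gt0 j_lt]; case: (leqP j n) => [j_le | n_lt].
- have Hc' : conf_is c false (j + (n - j)) 0 by rewrite subnKC.
  by rewrite (verdict_conf (iter_ascend Hc')) addn0 eqn0Ngt j_gt0.
- have [i Ej] : exists i, j = i + n.+1 by exists (j - n.+1); lia.
  subst j.
  have Hd : conf_is (iter n.+1 read c) true 1 (i + (n - i)).
    by rewrite subnKC; [exact: read_half_block | lia].
  by rewrite iterD (verdict_conf (iter_descend Hd)).
Qed.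

Lemma gauss_decomp m : exists n j, j < n.+1 + n.+1 /\ m = j + (n * n + n).
Proof.
elim: m => [|m [n [j [j_lt ->]]]]; first by exists 0, 0.
case: (ltnP j.+1 (n.+1 + n.+1)) => j_lt'; first by exists n, j.+1.
by exists n.+1, 0; split => //; lia.
Qed.

Lemma gauss_gap n j k :
  0 < j < n.+1 + n.+1 -> j + (n * n + n) <> k * k + k.
Proof.
move=> /andP[j_gt0 j_lt] E; case: (leqP k n) => [k_le | n_lt]; first nia.
have : n.+1 * n.+1 + n.+1 <= k * k + k by apply: leq_add => //; apply: leq_mul.
lia.
Qed.

Theorem theorem3 :
  exists M : rtDCA 2 unit, forall w : seq unit, accepts M w <-> UGAUSS w.
Proof.
exists gauss_dca => w; rewrite accepts_unary /UGAUSS /=.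
have [n [j [j_lt ->]]] := gauss_decomp (size w).
rewrite iterD; have Hstart := conf_is_block_start n.
case: (posnP j) => [-> | j_gt0].
- by rewrite (verdict_conf Hstart); split => // _; exists n.
- rewrite (verdict_within_block Hstart); last by rewrite j_gt0.
  by split => // -[k] /(gauss_gap _); rewrite j_gt0 j_lt => /(_ isT).
Qed.
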